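(* Let $G$ be a path graph with $L$ edges rooted at a vertex $O$ that is not an endpoint, and let all edges have activation probability $p\in(0,1]$. Then the value of the stochastic search game is $$\mathrm{val}(p)=\frac{L}{p}+\frac{1}{1-(1-p)^2}-\frac1p.$$ Moreover, the following are optimal strategies: - for the hider, the distribution putting mass $\lambda_i/L$ on the extreme edge of side $i$, where $\lambda_i$ is the number of edges on side $i$ of $O$; - for the searcher, the uniform depth-first strategy.
   Context: Setting: the stochastic search game on $G$. Every edge has length $1$ and is active at each stage independently with probability $p$. The hider chooses an edge and stays there. The searcher starts at $O$; at each stage, knowing which edges are currently active, she waits or traverses an active edge incident to her position. The hider's payoff is the expected first time the searcher traverses his edge. Uniform depth-first strategy, with edges oriented away from $O$: at the current vertex, - if some untraversed outgoing edge is active, take one chosen uniformly among the active untraversed outgoing edges; - if all untraversed outgoing edges are inactive, wait; - once all outgoing edges have been traversed, go back toward $O$ when that edge is active, and wait otherwise. *)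

From Stdlib Require Import Reals List Arith Bool.
Import ListNotations.
Open Scope R_scope.

(* Path graph with L edges: vertices 0..L, edge j joins vertices j and j+1.
   The root O is vertex k with 0 < k < L. *)

Inductive move := Wait | Left | Right.

Definition move_eqb (m1 m2 : move) : bool :=
  match m1, m2 with
  | Wait, Wait | Left, Left | Right, Right => true
  | _, _ => false
  end.

(* An activation pattern for one stage: the j-th entry says whether edge j is
   active (lists of length L). *)
Definition activation := list bool.

Fixpoint all_acts (n : nat) : list activation :=
  match n with
  | O => [[]]
  | S n' => map (cons true) (all_acts n') ++ map (cons false) (all_acts n')
  end.

Definition actprob (p : R) (a : activation) : R :=
  fold_right (fun (b : bool) (r : R) => (if b then p else 1 - p) * r) 1 a.

(* A history: the sequence (chronological) of past activation patterns and
   the searcher's actions. *)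
Definition history := list (activation * move).

Definition newpos (pos : nat) (m : move) : nat :=
  match m with Wait => pos | Left => pred pos | Right => S pos end.

Definition edge_of (pos : nat) (m : move) : list nat :=
  match m with
  | Wait => []
  | Left => if (0 <? pos)%nat then [pred pos] else []
  | Right => [pos]
  end.

Definition hits (pos : nat) (m : move) (e : nat) : bool :=
  existsb (Nat.eqb e) (edge_of pos m).

Fixpoint walk (pos : nat) (h : history) : nat * list nat :=
  match h with
  | [] => (pos, [])
  | (_, m) :: h' =>
      let r := walk (newpos pos m) h' in (fst r, edge_of pos m ++ snd r)
  end.

Definition pos_of (k : nat) (h : history) : nat := fst (walk k h).
Definition traversed (k : nat) (h : history) (e : nat) : bool :=
  existsb (Nat.eqb e) (snd (walk k h)).

(* Behavioural (randomized, full-recall) searcher strategy: given the past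
   history and the current activation pattern, a probability distribution on
   moves. *)
Definition strategy := history -> activation -> move -> R.

Definition legal (L k : nat) (s : strategy) : Prop :=
  forall (h : history) (a : activation),
    let pos := pos_of k h in
    (forall m, 0 <= s h a m) /\
    s h a Wait + s h a Left + s h a Right = 1 /\
    (s h a Left <> 0 ->
       (0 < pos)%nat /\ (pred pos < L)%nat /\ nth (pred pos) a false = true) /\
    (s h a Right <> 0 -> (pos < L)%nat /\ nth pos a false = true).

Definition sumR (l : list R) : R := fold_right Rplus 0 l.

(* notfound L p s e t pos h = probability that, continuing from history h
   (current position pos), the searcher does not traverse edge e during the
   next t stages. *)
Fixpoint notfound (L : nat) (p : R) (s : strategy) (e : nat) (t : nat)
    (pos : nat) (h : history) : R :=
  match t with
  | O => 1
  | S t' =>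
      sumR (map (fun a =>
        actprob p a *
        sumR (map (fun m =>
          s h a m *
          (if hits pos m e then 0
           else notfound L p s e t' (newpos pos m) (h ++ [(a, m)])))
          [Wait; Left; Right]))
        (all_acts L))
  end.

(* P(T_e > t), T_e = first stage at which edge e is traversed, starting at O=k. *)
Definition tail_prob (L k : nat) (p : R) (s : strategy) (e t : nat) : R :=
  notfound L p s e t k [].

(* Partial sums of E[T_e] = sum_{t>=0} P(T_e > t). *)
Definition exp_partial (L k : nat) (p : R) (s : strategy) (e N : nat) : R :=
  sum_f_R0 (fun t => tail_prob L k p s e t) N.

Definition hider_partial (L k : nat) (p : R) (s : strategy) (N : nat) : R :=
  sum_f_R0 (fun t => INR k / INR L * tail_prob L k p s 0 t
                     + INR (L - k) / INR L * tail_prob L k p s (pred L) t) N.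

Definition dfs (L k : nat) : strategy :=
  fun h a m =>
    let pos := pos_of k h in
    let tr := traversed k h in
    let act e := ((e <? L)%nat && nth e a false)%bool in
    if (pos =? k)%nat then
      let cl := (negb (tr (pred k)) && act (pred k))%bool in
      let cr := (negb (tr k) && act k)%bool in
      match m with
      | Left => if cl then (if cr then 1/2 else 1) else 0
      | Right => if cr then (if cl then 1/2 else 1) else 0
      | Wait => if (cl || cr)%bool then 0 else 1
      end
    else
      let go :=
        if (pos <? k)%nat then
          (* outgoing edge is pos-1 (exists iff pos > 0); back edge is pos *)
          if ((0 <? pos)%nat && negb (tr (pred pos)))%bool
          then (if act (pred pos) then Left else Wait)
          else (if act pos then Right else Wait)
        else
          (* outgoing edge is pos (exists iff pos < L); back edge is pos-1 *)
          if ((pos <? L)%nat && negb (tr pos))%bool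
          then (if act pos then Right else Wait)
          else (if act (pred pos) then Left else Wait)
      in if move_eqb m go then 1 else 0.

Definition game_value (L : nat) (p : R) : R :=
  INR L / p + 1 / (1 - (1 - p) ^ 2) - 1 / p.

(* Both bounds are potential-function (Bellman inequality) arguments for the
   finite-horizon expectation operator [Ex], summed by telescoping.
   - Lower bound.  Against the hider who picks edge 0 w.p. k/L and edge L-1
     w.p. (L-k)/L, a potential [Phi] of the position and of which extreme
     edges are traversed satisfies Phi <= cost + E[Phi after one stage] for
     every legal searcher, and Phi <= (L/p) cost.  Telescoping gives
     L val <= L F(N) + (L/p) L (F(N+1) - F(N)) for the partial sums F of the
     hider's payoff, so val <= lim F.
   - Upper bound.  Under the uniform depth-first search the traversed edges
     always form an interval around the root, the search is in one of eight
     phases, and away from the start each stage is a forced crossing of one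
     edge.  The potential [psi] (remaining crossings times 1/p, plus the wait
     for a root edge at the start) satisfies 1[e not found] + E[psi'] <= psi,
     so the partial sums of E[T_e] stay below psi(start) <= val. *)

From Stdlib Require Import Reals List Arith Lra Lia Bool.
Import ListNotations.
Open Scope R_scope.

Lemma sumR_app (l1 l2 : list R) : sumR (l1 ++ l2) = sumR l1 + sumR l2.
Proof. induction l1 as [|x l1 IH]; simpl; [lra | rewrite IH; lra]. Qed.

Lemma sumR_map_plus {A} (f g : A -> R) (l : list A) :
  sumR (map (fun x => f x + g x) l) = sumR (map f l) + sumR (map g l).
Proof. induction l as [|x l IH]; simpl; [lra | rewrite IH; lra]. Qed.

Lemma sumR_map_minus {A} (f g : A -> R) (l : list A) :
  sumR (map (fun x => f x - g x) l) = sumR (map f l) - sumR (map g l).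
Proof. induction l as [|x l IH]; simpl; [lra | rewrite IH; lra]. Qed.

Lemma sumR_map_scal {A} (c : R) (f : A -> R) (l : list A) :
  sumR (map (fun x => c * f x) l) = c * sumR (map f l).
Proof. induction l as [|x l IH]; simpl; [lra | rewrite IH; lra]. Qed.

Lemma sumR_map_ext {A} (f g : A -> R) (l : list A) :
  (forall x, In x l -> f x = g x) -> sumR (map f l) = sumR (map g l).
Proof.
  induction l as [|x l IH]; simpl; intros H; [reflexivity|].
  rewrite H, IH by auto; reflexivity.
Qed.

Lemma sumR_map_le {A} (f g : A -> R) (l : list A) :
  (forall x, In x l -> f x <= g x) -> sumR (map f l) <= sumR (map g l).
Proof.
  induction l as [|x l IH]; simpl; intros H; [lra|].
  pose proof (H x (or_introl eq_refl)). pose proof (IH (fun y hy => H y (or_intror hy))). lra.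
Qed.

Definition indb (b : bool) : R := if b then 1 else 0.

Lemma actprob_nonneg (p : R) (a : activation) : 0 <= p <= 1 -> 0 <= actprob p a.
Proof.
  intros Hp; induction a as [|b a IH]; simpl; [lra|].
  destruct b; apply Rmult_le_pos; lra.
Qed.

Lemma sum_acts_S (p : R) (n : nat) (g : activation -> R) :
  sumR (map (fun a => actprob p a * g a) (all_acts (S n))) =
  p * sumR (map (fun a => actprob p a * g (true :: a)) (all_acts n)) +
  (1 - p) * sumR (map (fun a => actprob p a * g (false :: a)) (all_acts n)).
Proof.
  simpl. rewrite map_app, sumR_app, !map_map, <- !sumR_map_scal.
  f_equal; apply sumR_map_ext; intros; simpl; ring.
Qed.

Lemma sum_acts_const (p : R) (n : nat) (c : R) :
  sumR (map (fun a => actprob p a * c) (all_acts n)) = c.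
Proof. induction n as [|n IH]; [simpl; ring | rewrite sum_acts_S, IH; ring]. Qed.

Lemma all_acts_length (n : nat) (a : activation) : In a (all_acts n) -> length a = n.
Proof.
  revert a; induction n as [|n IH]; simpl; intros a Ha.
  - destruct Ha as [<- | []]; reflexivity.
  - apply in_app_or in Ha as [Ha | Ha]; apply in_map_iff in Ha as [a' [<- Ha']];
      simpl; f_equal; auto.
Qed.

Lemma sum_acts_nth (p : R) (n i : nat) : (i < n)%nat ->
  sumR (map (fun a => actprob p a * indb (nth i a false)) (all_acts n)) = p.
Proof.
  revert i; induction n as [|n IH]; intros i Hi; [lia|]. rewrite sum_acts_S.
  destruct i as [|i]; simpl.
  - unfold indb; rewrite !sum_acts_const. ring.
  - rewrite IH by lia. ring.
Qed.

(* An edge outside the pattern is never active. *)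
Lemma sum_acts_nth_le (p : R) (n i : nat) : 0 <= p <= 1 ->
  sumR (map (fun a => actprob p a * indb (nth i a false)) (all_acts n)) <= p.
Proof.
  intros Hp. destruct (Nat.lt_ge_cases i n) as [Hi | Hi].
  - rewrite sum_acts_nth by exact Hi; lra.
  - rewrite (sumR_map_ext _ (fun a => actprob p a * 0)), sum_acts_const; [lra|].
    intros a Ha. rewrite nth_overflow by (rewrite (all_acts_length n a Ha); lia).
    reflexivity.
Qed.

Lemma sum_acts_and (p : R) (n i j : nat) : (i < j)%nat -> (j < n)%nat ->
  sumR (map (fun a => actprob p a * indb (nth i a false && nth j a false)) (all_acts n))
  = p * p.
Proof.
  revert i j; induction n as [|n IH]; intros i j Hij Hj; [lia|]. rewrite sum_acts_S.
  destruct i as [|i], j as [|j]; try lia; simpl.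
  - rewrite sum_acts_nth, sum_acts_const by lia. ring.
  - rewrite IH by lia. ring.
Qed.

Lemma sum_acts_or (p : R) (n i j : nat) : (i < j)%nat -> (j < n)%nat ->
  sumR (map (fun a => actprob p a * indb (nth i a false || nth j a false)) (all_acts n))
  = 1 - (1 - p) ^ 2.
Proof.
  intros Hij Hj.
  rewrite (sumR_map_ext _ (fun a => actprob p a * indb (nth i a false)
     + (actprob p a * indb (nth j a false)
        + (-1) * (actprob p a * indb (nth i a false && nth j a false))))).
  - rewrite !sumR_map_plus, sumR_map_scal, sum_acts_and, !sum_acts_nth by lia. ring.
  - intros a _. destruct (nth i a false), (nth j a false); unfold indb; simpl; ring.
Qed.

Lemma walk_snoc (pos : nat) (h : history) (a : activation) (m : move) :
  walk pos (h ++ [(a, m)]) =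
  (newpos (fst (walk pos h)) m, snd (walk pos h) ++ edge_of (fst (walk pos h)) m).
Proof.
  revert pos; induction h as [|[a' m'] h IH]; intros pos; simpl.
  - rewrite app_nil_r. reflexivity.
  - rewrite IH. simpl. rewrite app_assoc. reflexivity.
Qed.

Lemma pos_of_snoc (k : nat) (h : history) (a : activation) (m : move) :
  pos_of k (h ++ [(a, m)]) = newpos (pos_of k h) m.
Proof. unfold pos_of. rewrite walk_snoc. reflexivity. Qed.

Lemma traversed_snoc (k : nat) (h : history) (a : activation) (m : move) (e : nat) :
  traversed k (h ++ [(a, m)]) e = traversed k h e || hits (pos_of k h) m e.
Proof.
  unfold traversed, pos_of, hits. rewrite walk_snoc. simpl. apply existsb_app.
Qed.

Lemma hits_Wait (x e : nat) : hits x Wait e = false.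
Proof. reflexivity. Qed.

Lemma hits_Left (x e : nat) : hits x Left e = ((0 <? x)%nat && (e =? pred x)%nat).
Proof. unfold hits; simpl. destruct (0 <? x)%nat; simpl; [apply orb_false_r | reflexivity]. Qed.

Lemma hits_Right (x e : nat) : hits x Right e = (e =? x)%nat.
Proof. unfold hits; simpl. apply orb_false_r. Qed.

Ltac case_nat :=
  repeat match goal with
  | |- context [(?a <? ?b)%nat] => let E := fresh "E" in destruct (a <? b)%nat eqn:E;
       [apply Nat.ltb_lt in E | apply Nat.ltb_ge in E]
  | |- context [(?a =? ?b)%nat] => let E := fresh "E" in destruct (a =? b)%nat eqn:E;
       [apply Nat.eqb_eq in E | apply Nat.eqb_neq in E]
  end.

Ltac split_cmp :=
  match goal with
  | |- context [(?a <? ?b)%nat] => let E := fresh "E" in destruct (a <? b)%nat eqn:E;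
       [apply Nat.ltb_lt in E | apply Nat.ltb_ge in E]; try (exfalso; lia)
  | |- context [(?a =? ?b)%nat] => let E := fresh "E" in destruct (a =? b)%nat eqn:E;
       [apply Nat.eqb_eq in E | apply Nat.eqb_neq in E]; try (exfalso; lia)
  | |- context [(?a <=? ?b)%nat] => let E := fresh "E" in destruct (a <=? b)%nat eqn:E;
       [apply Nat.leb_le in E | apply Nat.leb_gt in E]; try (exfalso; lia)
  | H : context [(?a <? ?b)%nat] |- _ => let E := fresh "E" in destruct (a <? b)%nat eqn:E;
       [apply Nat.ltb_lt in E | apply Nat.ltb_ge in E]; try (exfalso; lia)
  | H : context [(?a =? ?b)%nat] |- _ => let E := fresh "E" in destruct (a =? b)%nat eqn:E;
       [apply Nat.eqb_eq in E | apply Nat.eqb_neq in E]; try (exfalso; lia)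
  | H : context [(?a <=? ?b)%nat] |- _ => let E := fresh "E" in destruct (a <=? b)%nat eqn:E;
       [apply Nat.leb_le in E | apply Nat.leb_gt in E]; try (exfalso; lia)
  | |- context [nth ?i ?a false] => let E := fresh "N" in destruct (nth i a false) eqn:E
  end.
Ltac crush := repeat (split_cmp; cbn [andb orb negb move_eqb] in *; try discriminate);
  try reflexivity; try lra; try lia.

(** Expectation over the next [n] stages.  [Ex L p s n h f] is the expected
    value of [f] at the history reached from [h] after [n] more stages played
    with the searcher strategy [s]. *)
Fixpoint Ex (L : nat) (p : R) (s : strategy) (n : nat) (h : history)
    (f : history -> R) : R :=
  match n with
  | O => f h
  | S n' => sumR (map (fun a => actprob p a *
        sumR (map (fun m => s h a m * Ex L p s n' (h ++ [(a, m)]) f) [Wait; Left; Right]))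
        (all_acts L))
  end.

Definition probdist (s : strategy) : Prop :=
  forall h a, (forall m, 0 <= s h a m) /\ s h a Wait + s h a Left + s h a Right = 1.

Lemma legal_probdist (L k : nat) (s : strategy) : legal L k s -> probdist s.
Proof. intros H h a. destruct (H h a) as [H1 [H2 _]]. split; assumption. Qed.

Section Expectation.
Variables (L : nat) (p : R) (s : strategy).
Hypothesis Hp : 0 <= p <= 1.
Hypothesis Hs : probdist s.

Lemma Ex_plus (n : nat) (h : history) (f g : history -> R) :
  Ex L p s n h (fun h => f h + g h) = Ex L p s n h f + Ex L p s n h g.
Proof.
  revert h; induction n as [|n IH]; intros h; simpl; [reflexivity|].
  rewrite <- sumR_map_plus. apply sumR_map_ext; intros a _. simpl. rewrite !IH. ring.
Qed.

Lemma Ex_scal (n : nat) (h : history) (c : R) (f : history -> R) :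
  Ex L p s n h (fun h => c * f h) = c * Ex L p s n h f.
Proof.
  revert h; induction n as [|n IH]; intros h; simpl; [reflexivity|].
  rewrite <- sumR_map_scal. apply sumR_map_ext; intros a _. simpl. rewrite !IH. ring.
Qed.

Lemma Ex_comp (n m : nat) (h : history) (f : history -> R) :
  Ex L p s n h (fun h' => Ex L p s m h' f) = Ex L p s (n + m) h f.
Proof.
  revert h; induction n as [|n IH]; intros h; simpl; [reflexivity|].
  apply sumR_map_ext; intros a _. simpl. rewrite !IH. reflexivity.
Qed.

Lemma Ex_const (n : nat) (h : history) (c : R) : Ex L p s n h (fun _ => c) = c.
Proof.
  revert h; induction n as [|n IH]; intros h; simpl; [reflexivity|].
  rewrite (sumR_map_ext _ (fun a => actprob p a * c)); [apply sum_acts_const|].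
  intros a _. simpl. rewrite !IH. destruct (Hs h a) as [_ Hsum].
  replace c with ((s h a Wait + s h a Left + s h a Right) * c) at 4 by (rewrite Hsum; ring).
  ring.
Qed.

Lemma Ex1_le (h : history) (f g : history -> R) :
  (forall a m, s h a m <> 0 -> f (h ++ [(a, m)]) <= g (h ++ [(a, m)])) ->
  Ex L p s 1 h f <= Ex L p s 1 h g.
Proof.
  intros H. simpl. apply sumR_map_le. intros a _.
  apply Rmult_le_compat_l; [apply actprob_nonneg; assumption|].
  destruct (Hs h a) as [Hn _].
  assert (Hm : forall m, s h a m * f (h ++ [(a, m)]) <= s h a m * g (h ++ [(a, m)])).
  { intros m. destruct (Req_dec (s h a m) 0) as [E | E]; [rewrite E; lra|].
    apply Rmult_le_compat_l; auto. }
  pose proof (Hm Wait); pose proof (Hm Left); pose proof (Hm Right). simpl. lra.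
Qed.

Lemma Ex_mono_inv (Inv : history -> Prop) :
  (forall h a m, Inv h -> s h a m <> 0 -> Inv (h ++ [(a, m)])) ->
  forall n h f g, (forall h, Inv h -> f h <= g h) -> Inv h ->
  Ex L p s n h f <= Ex L p s n h g.
Proof.
  intros Hinv n; induction n as [|n IH]; intros h f g Hfg Hh; simpl; [auto|].
  apply (Ex1_le h (fun h' => Ex L p s n h' f) (fun h' => Ex L p s n h' g)).
  intros a m Hm. apply IH; auto.
Qed.

Lemma Ex_mono (n : nat) (h : history) (f g : history -> R) :
  (forall h, f h <= g h) -> Ex L p s n h f <= Ex L p s n h g.
Proof. intros H. apply (Ex_mono_inv (fun _ => True)); auto. Qed.

Lemma Ex_nonneg (n : nat) (h : history) (f : history -> R) :
  (forall h, 0 <= f h) -> 0 <= Ex L p s n h f.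
Proof. intros H. rewrite <- (Ex_const n h 0). apply Ex_mono, H. Qed.

Lemma telescope_lower (Phi c : history -> R) :
  (forall h, Phi h <= c h + Ex L p s 1 h Phi) ->
  forall N h, Phi h <= sum_f_R0 (fun t => Ex L p s t h c) N + Ex L p s (S N) h Phi.
Proof.
  intros Hstep N h; induction N as [|N IH]; [apply Hstep|].
  assert (Hnext : Ex L p s (S N) h Phi <= Ex L p s (S N) h c + Ex L p s (S (S N)) h Phi).
  { replace (S (S N)) with (S N + 1)%nat by lia.
    rewrite <- Ex_comp, <- Ex_plus. apply Ex_mono, Hstep. }
  cbn [sum_f_R0]. lra.
Qed.

Lemma telescope_upper (Inv : history -> Prop) (Psi g : history -> R) :
  (forall h a m, Inv h -> s h a m <> 0 -> Inv (h ++ [(a, m)])) ->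
  (forall h, Inv h -> g h + Ex L p s 1 h Psi <= Psi h) ->
  forall N h, Inv h ->
  sum_f_R0 (fun t => Ex L p s t h g) N + Ex L p s (S N) h Psi <= Psi h.
Proof.
  intros Hinv Hstep N h Hh; induction N as [|N IH]; [apply Hstep; exact Hh|].
  assert (Hnext : Ex L p s (S N) h g + Ex L p s (S (S N)) h Psi <= Ex L p s (S N) h Psi).
  { replace (S (S N)) with (S N + 1)%nat by lia.
    rewrite <- Ex_comp, <- Ex_plus. apply (Ex_mono_inv Inv); auto. }
  cbn [sum_f_R0]. lra.
Qed.

End Expectation.

Definition not_found (k e : nat) (h : history) : R := if traversed k h e then 0 else 1.

Lemma notfound_Ex (L k : nat) (p : R) (s : strategy) (e t : nat) (h : history) :
  not_found k e h * notfound L p s e t (pos_of k h) h = Ex L p s t h (not_found k e).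
Proof.
  revert h; induction t as [|t IH]; intros h; simpl; [ring|].
  rewrite <- sumR_map_scal. apply sumR_map_ext; intros a _. simpl.
  rewrite <- !IH. unfold not_found. rewrite !traversed_snoc, !pos_of_snoc.
  destruct (traversed k h e); simpl; [ring|].
  destruct (hits (pos_of k h) Wait e), (hits (pos_of k h) Left e),
    (hits (pos_of k h) Right e); ring.
Qed.

Lemma tail_prob_Ex (L k : nat) (p : R) (s : strategy) (e t : nat) :
  tail_prob L k p s e t = Ex L p s t [] (not_found k e).
Proof.
  rewrite <- notfound_Ex. unfold tail_prob, not_found.
  change (traversed k [] e) with false. change (pos_of k []) with k. simpl. ring.
Qed.

Definition charge (s : strategy) (h : history) (a : activation) (B : move -> R) : R :=
  s h a Wait * B Wait + s h a Left * B Left + s h a Right * B Right.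

Lemma Ex1_charge (L : nat) (p : R) (s : strategy) (h : history)
    (P0 : R) (B : move -> R) (F : history -> R) :
  0 <= p <= 1 -> probdist s ->
  (forall a m, s h a m <> 0 -> P0 - B m <= F (h ++ [(a, m)])) ->
  P0 - sumR (map (fun a => actprob p a * charge s h a B) (all_acts L)) <= Ex L p s 1 h F.
Proof.
  intros Hp Hs H. simpl.
  rewrite <- (sum_acts_const p L P0) at 1.
  rewrite <- sumR_map_minus.
  apply sumR_map_le. intros a _.
  rewrite <- Rmult_minus_distr_l. apply Rmult_le_compat_l; [apply actprob_nonneg, Hp|].
  destruct (Hs h a) as [Hn Hsum].
  assert (Hm : forall m, s h a m * (P0 - B m) <= s h a m * F (h ++ [(a, m)])).
  { intros m. destruct (Req_dec (s h a m) 0) as [Z | Z]; [rewrite Z; lra|].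
    apply Rmult_le_compat_l; auto. }
  pose proof (Hm Wait); pose proof (Hm Left); pose proof (Hm Right).
  replace P0 with ((s h a Wait + s h a Left + s h a Right) * P0) at 1 by (rewrite Hsum; ring).
  unfold charge. simpl. lra.
Qed.

(** Expected waiting times: [/ p] stages until a given edge is active,
    [/ (1 - (1 - p) ^ 2)] until one of two given edges is active. *)

Section Waiting.
Variable p : R.
Hypothesis hp : 0 < p <= 1.

Lemma inv_p_pos : 0 < / p.
Proof. apply Rinv_0_lt_compat; lra. Qed.

Lemma inv_p_mul : / p * p = 1.
Proof. field; lra. Qed.

Lemma two_edges_pos : 0 < 1 - (1 - p) ^ 2.
Proof. nra. Qed.

Lemma inv_two_pos : 0 < / (1 - (1 - p) ^ 2).
Proof. apply Rinv_0_lt_compat, two_edges_pos. Qed.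

Lemma inv_two_mul : / (1 - (1 - p) ^ 2) * (1 - (1 - p) ^ 2) = 1.
Proof. field. apply Rgt_not_eq, two_edges_pos. Qed.

Lemma inv_two_le_inv_p : / (1 - (1 - p) ^ 2) <= / p.
Proof. apply Rinv_le_contravar; [lra | nra]. Qed.

Lemma inv_p_INR_nonneg (n : nat) : 0 <= / p * INR n.
Proof. apply Rmult_le_pos; [pose proof inv_p_pos; lra | apply pos_INR]. Qed.

Lemma inv_p_INR_le (n m : nat) : (n <= m)%nat -> / p * INR n <= / p * INR m.
Proof. intros H. apply Rmult_le_compat_l; [pose proof inv_p_pos; lra | apply le_INR, H]. Qed.

End Waiting.

(** Charges that a legal strategy can only incur by crossing an edge: a
    charge carried by a single non-waiting move is paid with probability at
    most [p]; a charge carried by the two moves out of the root (when both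
    root edges exist) with probability at most [1 - (1 - p) ^ 2]. *)

Section LegalCharges.
Variables (L k : nat) (p : R) (s : strategy).
Hypothesis hk0 : (0 < k)%nat.
Hypothesis hkL : (k < L)%nat.
Hypothesis hp : 0 < p <= 1.
Hypothesis Hl : legal L k s.

Lemma charge_single_move (h : history) (mt : move) (g : R) (B : move -> R) :
  mt <> Wait -> (forall m, 0 <= B m <= if move_eqb m mt then g else 0) ->
  sumR (map (fun a => actprob p a * charge s h a B) (all_acts L)) <= g * p.
Proof.
  intros Hmt HB.
  set (et := match mt with Left => pred (pos_of k h) | _ => pos_of k h end).
  apply Rle_trans with (sumR (map (fun a => actprob p a * (g * indb (nth et a false))) (all_acts L))).
  - apply sumR_map_le. intros a _. apply Rmult_le_compat_l; [apply actprob_nonneg; lra|].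
    destruct (Hl h a) as [Hn [Hsum [HLeft HRight]]].
    assert (Hcross : s h a mt <= indb (nth et a false)).
    { destruct (nth et a false) eqn:Et; unfold indb.
      - pose proof (Hn Wait); pose proof (Hn Left); pose proof (Hn Right). destruct mt; lra.
      - destruct mt; [congruence | |].
        + destruct (Req_dec (s h a Left) 0) as [Z | Z]; [lra|].
          destruct (HLeft Z) as [_ [_ X]]. subst et. congruence.
        + destruct (Req_dec (s h a Right) 0) as [Z | Z]; [lra|].
          destruct (HRight Z) as [_ X]. subst et. congruence. }
    pose proof (HB Wait); pose proof (HB Left); pose proof (HB Right).
    pose proof (Hn Wait); pose proof (Hn Left); pose proof (Hn Right).
    unfold charge. destruct mt; [congruence | |]; simpl in *; nra.
  - rewrite (sumR_map_ext _ (fun a => g * (actprob p a * indb (nth et a false)))) by (intros; ring).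
    rewrite sumR_map_scal.
    assert (0 <= g) by (specialize (HB mt); destruct mt; simpl in HB; lra).
    pose proof (sum_acts_nth_le p L et (conj (Rlt_le _ _ (proj1 hp)) (proj2 hp))). nra.
Qed.

Lemma charge_root (h : history) (g : R) (B : move -> R) :
  pos_of k h = k -> B Wait = 0 -> (forall m, 0 <= B m <= g) ->
  sumR (map (fun a => actprob p a * charge s h a B) (all_acts L)) <= g * (1 - (1 - p) ^ 2).
Proof.
  intros Hpos HW HB.
  apply Rle_trans with (sumR (map (fun a =>
    actprob p a * (g * indb (nth (pred k) a false || nth k a false))) (all_acts L))).
  - apply sumR_map_le. intros a _. apply Rmult_le_compat_l; [apply actprob_nonneg; lra|].
    destruct (Hl h a) as [Hn [Hsum [HLeft HRight]]]. rewrite Hpos in *.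
    pose proof (HB Left); pose proof (HB Right).
    pose proof (Hn Wait); pose proof (Hn Left); pose proof (Hn Right).
    unfold charge. rewrite HW.
    destruct (nth (pred k) a false || nth k a false) eqn:En; unfold indb; [nra|].
    apply orb_false_iff in En as [E1 E2].
    destruct (Req_dec (s h a Left) 0) as [Z | Z]; [|destruct (HLeft Z) as [_ [_ X]]; congruence].
    destruct (Req_dec (s h a Right) 0) as [Z' | Z']; [|destruct (HRight Z') as [_ X]; congruence].
    rewrite Z, Z'. lra.
  - rewrite (sumR_map_ext _ (fun a => g * (actprob p a * indb (nth (pred k) a false || nth k a false))))
      by (intros; ring).
    rewrite sumR_map_scal, sum_acts_or by lia. lra.
Qed.

End LegalCharges.

(** * Lower bound: the hider's distribution

    The state relevant to him is the searcher's
    position [x] and whether edge [0] ([f0]) and edge [L-1] ([f1]) have been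
    traversed.  [phi] is a lower bound for [L] times the expected remaining
    search cost from such a state; it consists of [/ p] times a number of
    edge crossings ([phi_nat]) plus, at the untouched root, the expected wait
    [/ (1 - (1 - p) ^ 2)] for one of the two root edges, weighted by [L]. *)

Section HiderBound.
Variables (L k : nat) (p : R).
Hypothesis hk0 : (0 < k)%nat.
Hypothesis hkL : (k < L)%nat.
Hypothesis hp : 0 < p <= 1.

(* Crossings still needed to traverse edge [L-1], resp. edge [0], from [x]. *)
Definition cross_last (x : nat) : nat := if (x <? L)%nat then (L - x)%nat else 1%nat.
Definition cross_first (x : nat) : nat := if (x =? 0)%nat then 1%nat else Nat.min x L.
(* Weighted crossings needed when neither extreme edge has been traversed. *)
Definition cross_both (x : nat) : nat :=
  if (x <? k)%nat then (x + (L - k))%nat else (L - Nat.min x L + k)%nat.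

Definition phi_nat (x : nat) (f0 f1 : bool) : nat :=
  match f0, f1 with
  | true, true => 0
  | true, false => (L - k) * cross_last x
  | false, true => k * cross_first x
  | false, false => if (x =? k)%nat then L * (L - 1) else L * cross_both x
  end.

Definition untouched_root (x : nat) (f0 f1 : bool) : bool :=
  (negb f0 && negb f1 && (x =? k))%bool.

Definition phi (x : nat) (f0 f1 : bool) : R :=
  / p * INR (phi_nat x f0 f1)
  + (if untouched_root x f0 f1 then INR L * / (1 - (1 - p) ^ 2) else 0).

Definition toward (x : nat) : move :=
  if (x <? k)%nat then (if (x =? 0)%nat then Right else Left)
  else (if (x <? L)%nat then Right else Left).

(* The charge [beta x f0 f1 m] of move [m]: the decrease of [phi] it can
   achieve.  It is carried by the single progressing move, or by the two moves
   out of the untouched root. *)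
Definition beta_nat (x : nat) (f0 f1 : bool) (m : move) : nat :=
  match f0, f1 with
  | true, true => 0
  | true, false => if move_eqb m (if (x <? L)%nat then Right else Left) then (L - k)%nat else 0
  | false, true => if move_eqb m (if (x =? 0)%nat then Right else Left) then k else 0
  | false, false => if (x =? k)%nat then 0 else if move_eqb m (toward x) then L else 0
  end.

Definition beta (x : nat) (f0 f1 : bool) (m : move) : R :=
  / p * INR (beta_nat x f0 f1 m)
  + (if (untouched_root x f0 f1 && negb (move_eqb m Wait))%bool
     then INR L * / (1 - (1 - p) ^ 2) else 0).

Lemma phi_nat_step (x : nat) (f0 f1 : bool) (m : move) :
  (m = Left -> (0 < x)%nat /\ (pred x < L)%nat) -> (m = Right -> (x < L)%nat) ->
  (phi_nat x f0 f1 <= phi_nat (newpos x m) (f0 || hits x m 0) (f1 || hits x m (pred L))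
                      + beta_nat x f0 f1 m)%nat.
Proof.
  intros HL HR.
  destruct m; [clear HL HR | specialize (HL eq_refl); clear HR | specialize (HR eq_refl); clear HL];
    rewrite ?hits_Wait, ?hits_Left, ?hits_Right; destruct f0, f1; cbn [orb];
    unfold phi_nat, beta_nat, toward, cross_first, cross_last, cross_both, newpos;
    case_nat; cbn [move_eqb andb orb negb]; nia.
Qed.

(* The root bonus can only be lost by leaving the root. *)
Lemma root_bonus_step (x : nat) (f0 f1 : bool) (m : move) :
  (if (untouched_root x f0 f1 && negb (move_eqb m Wait))%bool then 1 else 0)
  + (if untouched_root (newpos x m) (f0 || hits x m 0) (f1 || hits x m (pred L)) then 1 else 0)
  >= (if untouched_root x f0 f1 then 1 else 0).
Proof.
  destruct m; cbn [newpos move_eqb negb]; rewrite ?hits_Wait, ?orb_false_r,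
    ?andb_false_r, ?andb_true_r; destruct (untouched_root x f0 f1);
    repeat match goal with |- context [if ?b then _ else _] => destruct b end; lra.
Qed.

Lemma phi_step (x : nat) (f0 f1 : bool) (m : move) :
  (m = Left -> (0 < x)%nat /\ (pred x < L)%nat) -> (m = Right -> (x < L)%nat) ->
  phi x f0 f1 - beta x f0 f1 m
  <= phi (newpos x m) (f0 || hits x m 0) (f1 || hits x m (pred L)).
Proof.
  intros HL HR.
  pose proof (le_INR _ _ (phi_nat_step x f0 f1 m HL HR)) as Hnat. rewrite plus_INR in Hnat.
  pose proof (root_bonus_step x f0 f1 m) as Hroot.
  pose proof (inv_p_pos p hp). pose proof (inv_two_pos p hp). pose proof (pos_INR L).
  assert (0 <= INR L * / (1 - (1 - p) ^ 2)) by (apply Rmult_le_pos; lra).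
  unfold phi, beta.
  destruct (untouched_root x f0 f1 && negb (move_eqb m Wait))%bool,
    (untouched_root (newpos x m) _ _), (untouched_root x f0 f1); nra.
Qed.

Definition Phi (h : history) : R :=
  phi (pos_of k h) (traversed k h 0) (traversed k h (pred L)).

(* [L] times the probability that the hider is not yet found. *)
Definition cost (h : history) : R :=
  INR k * not_found k 0 h + INR (L - k) * not_found k (pred L) h.

Lemma charge_crossing (s : strategy) (h : history) (B : move -> R) (mt : move) (c : nat) :
  legal L k s -> mt <> Wait ->
  (forall m, B m = if move_eqb m mt then / p * INR c else 0) ->
  sumR (map (fun a => actprob p a * charge s h a B) (all_acts L)) <= INR c.
Proof.
  intros Hl Hmt HB. replace (INR c) with (/ p * INR c * p) by (field; lra).
  apply (charge_single_move L k p s hp Hl h mt); [exact Hmt|].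
  intros m. rewrite HB. destruct (move_eqb m mt); split; try lra.
  apply inv_p_INR_nonneg, hp.
Qed.

Lemma expected_charge_le_cost (s : strategy) (h : history) : legal L k s ->
  sumR (map (fun a => actprob p a *
    charge s h a (beta (pos_of k h) (traversed k h 0) (traversed k h (pred L)))) (all_acts L))
  <= cost h.
Proof.
  intros Hl. unfold cost, not_found.
  set (x := pos_of k h). set (f0 := traversed k h 0). set (f1 := traversed k h (pred L)).
  pose proof (inv_two_pos p hp). pose proof (inv_two_mul p hp).
  pose proof (pos_INR k). pose proof (pos_INR (L - k)). pose proof (pos_INR L).
  assert (HLk : INR k + INR (L - k) = INR L) by (rewrite <- plus_INR; f_equal; lia).
  assert (Hbeta : forall m, beta x f0 f1 m = / p * INR (beta_nat x f0 f1 m)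
    + (if (untouched_root x f0 f1 && negb (move_eqb m Wait))%bool
       then INR L * / (1 - (1 - p) ^ 2) else 0)) by reflexivity.
  unfold beta_nat, untouched_root in Hbeta.
  destruct f0, f1; cbn [negb andb] in Hbeta |- *.
  -
    apply Rle_trans with (0 * p); [|lra].
    apply (charge_single_move L k p s hp Hl h Left); [discriminate|].
    intros m. rewrite Hbeta. destruct m; simpl; lra.
  -
    apply Rle_trans with (INR (L - k)); [|lra].
    apply (charge_crossing s h _ (if (x <? L)%nat then Right else Left) _ Hl); [case_nat; discriminate|].
    intros m. rewrite Hbeta. destruct (move_eqb m _); simpl; lra.
  -
    apply Rle_trans with (INR k); [|lra].
    apply (charge_crossing s h _ (if (x =? 0)%nat then Right else Left) _ Hl); [case_nat; discriminate|].
    intros m. rewrite Hbeta. destruct (move_eqb m _); simpl; lra.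
  - destruct (x =? k)%nat eqn:Ex; cbn [andb] in Hbeta.
    +
      apply Nat.eqb_eq in Ex.
      replace (INR k * 1 + INR (L - k) * 1) with
        (INR L * / (1 - (1 - p) ^ 2) * (1 - (1 - p) ^ 2)) by (rewrite Rmult_assoc; nra).
      apply (charge_root L k p s hk0 hkL hp Hl); [exact Ex | rewrite Hbeta; cbn [move_eqb negb INR]; lra|].
      intros m. pose proof (Rmult_le_pos _ _ (pos_INR L) (Rlt_le _ _ (inv_two_pos p hp))).
      rewrite Hbeta. destruct m; cbn [move_eqb negb INR]; lra.
    +
      apply Rle_trans with (INR L); [|lra].
      apply (charge_crossing s h _ (toward x) _ Hl); [unfold toward; case_nat; discriminate|].
      intros m. rewrite Hbeta. destruct (move_eqb m _); simpl; lra.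
Qed.

Lemma Phi_step (s : strategy) (h : history) : legal L k s ->
  Phi h <= cost h + Ex L p s 1 h Phi.
Proof.
  intros Hl.
  assert (Hp' : 0 <= p <= 1) by lra.
  pose proof (Ex1_charge L p s h (Phi h)
    (beta (pos_of k h) (traversed k h 0) (traversed k h (pred L))) Phi Hp'
    (legal_probdist L k s Hl)) as Hstep.
  pose proof (expected_charge_le_cost s h Hl).
  enough (Phi h - sumR (map (fun a => actprob p a * charge s h a
    (beta (pos_of k h) (traversed k h 0) (traversed k h (pred L)))) (all_acts L))
    <= Ex L p s 1 h Phi) by lra.
  apply Hstep. intros a m Hm. unfold Phi. rewrite pos_of_snoc, !traversed_snoc.
  destruct (Hl h a) as [_ [_ [HLeft HRight]]].
  apply phi_step.
  - intros ->. destruct (HLeft Hm) as [? [? _]]; auto.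
  - intros ->. destruct (HRight Hm) as [? _]; auto.
Qed.

(* The potential is never more than [L / p] times the current cost; this
   controls the terminal term of the telescoped inequality. *)
Lemma Phi_le_cost (h : history) : Phi h <= / p * INR L * cost h.
Proof.
  pose proof (inv_p_pos p hp). pose proof (inv_two_le_inv_p p hp).
  pose proof (inv_two_pos p hp). pose proof (pos_INR L).
  assert (HLk : INR k + INR (L - k) = INR L) by (rewrite <- plus_INR; f_equal; lia).
  unfold Phi, cost, not_found, phi, untouched_root.
  set (x := pos_of k h).
  destruct (traversed k h 0), (traversed k h (pred L)); cbn [negb andb]; rewrite ?Rplus_0_r.
  - unfold phi_nat. simpl. lra.
  - assert (INR (phi_nat x true false) <= INR L * INR (L - k)).
    { rewrite <- mult_INR. apply le_INR. unfold phi_nat, cross_last. case_nat; nia. }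
    nra.
  - assert (INR (phi_nat x false true) <= INR L * INR k).
    { rewrite <- mult_INR. apply le_INR. unfold phi_nat, cross_first. case_nat; nia. }
    nra.
  - destruct (x =? k)%nat eqn:Ex; unfold phi_nat; rewrite Ex.
    + assert (INR (L * (L - 1)) + INR L <= INR L * INR L).
      { rewrite <- plus_INR, <- mult_INR. apply le_INR. nia. }
      assert (INR L * / (1 - (1 - p) ^ 2) <= INR L * / p) by (apply Rmult_le_compat_l; lra).
      assert (/ p * (INR (L * (L - 1)) + INR L) <= / p * (INR L * INR L))
        by (apply Rmult_le_compat_l; lra).
      nra.
    + assert (INR (L * cross_both x) <= INR L * INR L).
      { rewrite <- mult_INR. apply le_INR. unfold cross_both. case_nat; nia. }
      assert (/ p * INR (L * cross_both x) <= / p * (INR L * INR L))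
        by (apply Rmult_le_compat_l; lra).
      nra.
Qed.

Lemma Phi_nil : Phi [] = INR L * game_value L p.
Proof.
  unfold Phi, phi, phi_nat, untouched_root.
  change (pos_of k []) with k. change (traversed k [] 0) with false.
  change (traversed k [] (pred L)) with false. rewrite Nat.eqb_refl. simpl.
  unfold game_value. rewrite mult_INR, minus_INR by lia. simpl INR.
  field. split; [lra | apply Rgt_not_eq, two_edges_pos, hp].
Qed.

Lemma hider_partial_Ex (s : strategy) (N : nat) : probdist s ->
  INR L * hider_partial L k p s N = sum_f_R0 (fun t => Ex L p s t [] cost) N.
Proof.
  intros Hs. assert (HL : INR L <> 0) by (apply not_0_INR; lia).
  unfold hider_partial. rewrite scal_sum. apply sum_eq. intros t _.
  unfold cost. rewrite Ex_plus, !Ex_scal, !tail_prob_Ex by auto. field. exact HL.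
Qed.

(* Telescoping [Phi_step] gives
   [L val <= L F(N) + Ex (N+1) Phi <= L F(N) + (L/p) L (F(N+1) - F(N))]
   for the partial sums [F], and the increments vanish in the limit. *)
Theorem lower_bound (s : strategy) : legal L k s ->
  forall l, Un_cv (hider_partial L k p s) l -> game_value L p <= l.
Proof.
  intros Hl l Hcv. pose proof (legal_probdist L k s Hl) as Hs.
  assert (Hp' : 0 <= p <= 1) by lra.
  set (F := hider_partial L k p s).
  assert (HL : 0 < INR L) by (apply lt_0_INR; lia).
  assert (Key : forall N, game_value L p <= F N + / p * INR L * (F (S N) - F N)).
  { intros N.
    pose proof (telescope_lower L p s Hp' Hs Phi cost (fun h => Phi_step s h Hl) N []) as T.
    rewrite Phi_nil, <- hider_partial_Ex in T by exact Hs.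
    assert (Hterm : Ex L p s (S N) [] Phi <= / p * INR L * Ex L p s (S N) [] cost).
    { rewrite <- Ex_scal. apply Ex_mono; [exact Hp' | exact Hs | exact Phi_le_cost]. }
    assert (Hinc : Ex L p s (S N) [] cost = INR L * F (S N) - INR L * F N).
    { unfold F. rewrite !hider_partial_Ex by exact Hs. cbn [sum_f_R0]. ring. }
    rewrite Hinc in Hterm. fold F in T.
    apply Rmult_le_reg_l with (INR L); [exact HL|]. nra. }
  assert (C : Un_cv (fun N => F N + / p * INR L * (F (S N) - F N)) (l + / p * INR L * (l - l))).
  { apply CV_plus; [exact Hcv|]. apply CV_mult.
    - intros eps Heps; exists O; intros; rewrite R_dist_eq; auto.
    - apply CV_minus; [|exact Hcv]. intros eps Heps. destruct (Hcv eps Heps) as [N0 HN0].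
      exists N0. intros n Hn. apply HN0. lia. }
  replace l with (l + / p * INR L * (l - l)) by ring.
  eapply Rle_cv_lim; [exact Key | | exact C].
  intros eps Heps; exists O; intros; rewrite R_dist_eq; auto.
Qed.

End HiderBound.

(** * Upper bound: the uniform depth-first strategy *)

Section DepthFirst.
Variables (L k : nat).
Hypothesis hk0 : (0 < k)%nat.
Hypothesis hkL : (k < L)%nat.

(* The depth-first strategy only looks at the current position [x] and the
   set [tr] of edges traversed so far. *)
Definition dfs_rule (x : nat) (tr : nat -> bool) (a : activation) (m : move) : R :=
  let act e := ((e <? L)%nat && nth e a false)%bool in
  if (x =? k)%nat then
    let cl := (negb (tr (pred k)) && act (pred k))%bool in
    let cr := (negb (tr k) && act k)%bool in
    match m with
    | Left => if cl then (if cr then 1/2 else 1) else 0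
    | Right => if cr then (if cl then 1/2 else 1) else 0
    | Wait => if (cl || cr)%bool then 0 else 1
    end
  else
    let go :=
      if (x <? k)%nat then
        if ((0 <? x)%nat && negb (tr (pred x)))%bool
        then (if act (pred x) then Left else Wait)
        else (if act x then Right else Wait)
      else
        if ((x <? L)%nat && negb (tr x))%bool
        then (if act x then Right else Wait)
        else (if act (pred x) then Left else Wait)
    in if move_eqb m go then 1 else 0.

Lemma dfs_rule_eq (h : history) (a : activation) (m : move) :
  dfs L k h a m = dfs_rule (pos_of k h) (traversed k h) a m.
Proof. reflexivity. Qed.

Ltac split_guards :=
  repeat match goal with
  | |- context [if ?b then _ else _] => let E := fresh "G" in destruct b eqn:E
  end;
  repeat match goal with
  | H : (_ && _)%bool = true |- _ => apply andb_true_iff in H as [? ?]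
  | H : negb _ = true |- _ => apply negb_true_iff in H
  | H : (_ <? _)%nat = true |- _ => apply Nat.ltb_lt in H
  | H : (_ <? _)%nat = false |- _ => apply Nat.ltb_ge in H
  end.

Lemma point_mass_legal (x : nat) (a : activation) (go : move) :
  (go = Left -> (0 < x)%nat /\ (pred x < L)%nat /\ nth (pred x) a false = true) ->
  (go = Right -> (x < L)%nat /\ nth x a false = true) ->
  let s := fun m => if move_eqb m go then 1 else 0 in
  (forall m, 0 <= s m) /\ s Wait + s Left + s Right = 1 /\
  (s Left <> 0 -> (0 < x)%nat /\ (pred x < L)%nat /\ nth (pred x) a false = true) /\
  (s Right <> 0 -> (x < L)%nat /\ nth x a false = true).
Proof.
  intros HL HR s. unfold s. split; [|split; [|split]].
  - intros m; destruct m, go; simpl; lra.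
  - destruct go; simpl; lra.
  - destruct go; simpl; intros C; try (exfalso; lra); apply HL; reflexivity.
  - destruct go; simpl; intros C; try (exfalso; lra); apply HR; reflexivity.
Qed.

Lemma dfs_legal : legal L k (dfs L k).
Proof.
  intros h a. change (dfs L k h) with (dfs_rule (pos_of k h) (traversed k h)).
  generalize (pos_of k h) (traversed k h). intros x tr. unfold dfs_rule.
  destruct (x =? k)%nat eqn:Ex; cbv beta iota zeta.
  -
    apply Nat.eqb_eq in Ex. subst x.
    destruct (negb (tr (pred k)) && ((pred k <? L)%nat && nth (pred k) a false))%bool eqn:Hl,
      (negb (tr k) && ((k <? L)%nat && nth k a false))%bool eqn:Hr;
      repeat match goal with
      | H : (_ && _)%bool = true |- _ => apply andb_true_iff in H as [? ?]
      | H : (_ <? _)%nat = true |- _ => apply Nat.ltb_lt in H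
      end;
      cbn [orb]; repeat split; try (intros m; destruct m); try intros ?; try lra; auto; lia.
  -
    apply Nat.eqb_neq in Ex. apply point_mass_legal; intros Hgo; revert Hgo;
      split_guards; intros Hgo; try discriminate; repeat split; auto; lia.
Qed.

(** Reachable states of the depth-first search.  The traversed edges always
    form an interval [[a, b)] around the root, and the position is determined
    by the phase of the search: *)
Definition dfs_phase (a b x : nat) : Prop :=
  ((a = k /\ b = k /\ x = k)                               (* start *)
  \/ (0 < a < k /\ x = a /\ (b = k \/ b = L))              (* left side, outward *)
  \/ (a = 0 /\ x < k /\ (b = k \/ b = L))                  (* left side, homeward *)
  \/ (a = 0 /\ b = k /\ x = k)                             (* root, left side done *)
  \/ (a = 0 /\ b = L /\ x = k)                             (* root, all done *)
  \/ (k < b < L /\ x = b /\ (a = k \/ a = 0))              (* right side, outward *)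
  \/ (b = L /\ k < x <= L /\ (a = k \/ a = 0))             (* right side, homeward *)
  \/ (a = k /\ b = L /\ x = k))%nat.                       (* root, right side done *)

Ltac pick_phase :=
  match goal with |- dfs_phase ?a ?b ?x =>
    unfold dfs_phase;
    repeat match goal with
    | H : _ /\ _ |- _ => destruct H
    | H : _ \/ _ |- _ => destruct H
    end;
    destruct (Nat.eq_dec a 0), (Nat.eq_dec b L), (Nat.eq_dec x k); simpl newpos in *;
    repeat (first [left; lia | right]); lia
  end.

Definition dfs_state (x : nat) (tr : nat -> bool) : Prop :=
  exists a b, (forall y, tr y = ((a <=? y) && (y <? b))%nat) /\ dfs_phase a b x.

Definition after_tr (x : nat) (tr : nat -> bool) (m : move) : nat -> bool :=
  fun y => (tr y || hits x m y)%bool.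

Lemma traversed_snoc_after (h : history) (a : activation) (m : move) (y : nat) :
  traversed k (h ++ [(a, m)]) y = after_tr (pos_of k h) (traversed k h) m y.
Proof. apply traversed_snoc. Qed.

Lemma dfs_state_ext (x : nat) (tr1 tr2 : nat -> bool) :
  (forall y, tr1 y = tr2 y) -> dfs_state x tr1 -> dfs_state x tr2.
Proof. intros H [a [b [Htr Hph]]]. exists a, b. split; [intros y; rewrite <- H; auto | exact Hph]. Qed.

Lemma dfs_state_start : dfs_state k (fun _ => false).
Proof. exists k, k. split; [intros y; crush | pick_phase]. Qed.

Lemma dfs_state_first_move (tr : nat -> bool) (m : move) :
  (forall y, tr y = false) -> dfs_state (newpos k m) (after_tr k tr m).
Proof.
  intros Hz. destruct m.
  - apply (dfs_state_ext _ (fun _ => false)); [|exact dfs_state_start].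
    intros y. unfold after_tr. rewrite Hz. reflexivity.
  - exists (pred k), k. unfold after_tr.
    split; [intros y; rewrite Hz, hits_Left; crush | pick_phase].
  - exists k, (S k). unfold after_tr.
    split; [intros y; rewrite Hz, hits_Right; crush | pick_phase].
Qed.

Definition forced (et : nat) (mt : move) (a : activation) (m : move) : R :=
  if nth et a false then (if move_eqb m mt then 1 else 0) else (if move_eqb m Wait then 1 else 0).

Lemma start_rule (tr : nat -> bool) (a : activation) : (forall y, tr y = false) ->
  dfs_rule k tr a Wait = 1 - indb (nth (pred k) a false || nth k a false) /\
  dfs_rule k tr a Left = indb (nth (pred k) a false) - / 2 * indb (nth (pred k) a false && nth k a false) /\
  dfs_rule k tr a Right = indb (nth k a false) - / 2 * indb (nth (pred k) a false && nth k a false).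
Proof. intros Hz. unfold dfs_rule, indb. rewrite !Hz. crush; repeat split; lra. Qed.

(** Fix now the hider's edge [e].  [remaining x tr] is the number of edge
    crossings the search still makes before it traverses [e]. *)

Variable e : nat.
Hypothesis he : (e < L)%nat.

Definition remaining (x : nat) (tr : nat -> bool) : nat :=
  if (e <? k)%nat then
    (if ((k <? x)%nat && negb (tr (pred L)))%bool then (2 * L - x - e)%nat else (x - e)%nat)
  else (if ((x <? k)%nat && negb (tr 0%nat))%bool then (x + e + 1)%nat else (e + 1 - x)%nat).

Lemma remaining_ext (x : nat) (tr1 tr2 : nat -> bool) :
  (forall y, tr1 y = tr2 y) -> remaining x tr1 = remaining x tr2.
Proof. intros H. unfold remaining. rewrite !H. reflexivity. Qed.

Definition forced_step (x : nat) (tr : nat -> bool) (mt : move) (et : nat) : Prop :=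
  mt <> Wait /\ (et < L)%nat /\
  (forall a m, dfs_rule x tr a m = forced et mt a m) /\
  dfs_state (newpos x mt) (after_tr x tr mt) /\
  (tr (pred k) || tr k)%bool = true /\
  (tr e = false -> (1 <= remaining x tr)%nat /\
     (after_tr x tr mt e = false ->
        (remaining (newpos x mt) (after_tr x tr mt) + 1 <= remaining x tr)%nat)).

Ltac forced_case Htr mt et a' b' :=
  right; right; exists mt, et;
  split; [discriminate|]; split; [lia|];
  split; [intros a0 m; unfold dfs_rule, forced; rewrite !Htr; destruct m; crush|];
  split; [exists a', b'; split;
          [intros y; unfold after_tr; rewrite Htr, ?hits_Left, ?hits_Right; crush
          | pick_phase]|];
  split; [rewrite !Htr; crush|];
  unfold after_tr, remaining; rewrite !Htr, ?hits_Left, ?hits_Right; simpl newpos;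
  intros G1; split; [|intros G2]; crush.

Lemma dfs_state_cases (x : nat) (tr : nat -> bool) : dfs_state x tr ->
  (x = k /\ forall y, tr y = false) \/
  ((forall a m, dfs_rule x tr a m = if move_eqb m Wait then 1 else 0) /\ tr e = true) \/
  (exists mt et, forced_step x tr mt et).
Proof.
  intros [a [b [Htr Hph]]].
  destruct Hph as [C | [C | [C | [C | [C | [C | [C | C]]]]]]].
  - left. split; [lia|]. intros y. rewrite Htr. crush.
  - forced_case Htr Left (pred x) (pred a) b.
  - forced_case Htr Right x 0%nat b.
  - forced_case Htr Right k 0%nat (S k).
  - right; left. split.
    + intros a0 m. unfold dfs_rule. rewrite !Htr. destruct m; crush.
    + rewrite Htr. crush.
  - forced_case Htr Right x a (S b).
  - forced_case Htr Left (pred x) a L.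
  - forced_case Htr Left (pred k) (pred k) L.
Qed.

(** The expected remaining search time for [e] from a reachable state is at
    most [psi]: [/ p] per remaining crossing once the search has left the
    root, and at the start the expected wait [/ (1 - (1 - p) ^ 2)] for a root
    edge plus the average of the two sides. *)

Variable p : R.
Hypothesis hp : 0 < p <= 1.

Definition start_crossings : nat := if (e <? k)%nat then (L - e - 1)%nat else e.

Definition start_cost : R := / (1 - (1 - p) ^ 2) + / p * INR start_crossings.

Definition psi (x : nat) (tr : nat -> bool) : R :=
  if tr e then 0
  else if (negb (tr (pred k)) && negb (tr k))%bool then start_cost
  else / p * INR (remaining x tr).

Definition Psi (h : history) : R := psi (pos_of k h) (traversed k h).

Definition reachable (h : history) : Prop := dfs_state (pos_of k h) (traversed k h).

Lemma psi_ext (x : nat) (tr1 tr2 : nat -> bool) :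
  (forall y, tr1 y = tr2 y) -> psi x tr1 = psi x tr2.
Proof. intros H. unfold psi. rewrite !H, (remaining_ext x tr1 tr2 H). reflexivity. Qed.

Lemma psi_nonneg (x : nat) (tr : nat -> bool) : 0 <= psi x tr.
Proof.
  pose proof (inv_two_pos p hp). pose proof (inv_p_INR_nonneg p hp start_crossings).
  unfold psi, start_cost. destruct (tr e); [lra|].
  destruct (negb (tr (pred k)) && negb (tr k))%bool; [lra | apply inv_p_INR_nonneg, hp].
Qed.

Definition next_psi (x : nat) (tr : nat -> bool) (a : activation) : R :=
  sumR (map (fun m => dfs_rule x tr a m * psi (newpos x m) (after_tr x tr m)) [Wait; Left; Right]).

Lemma Ex1_Psi (h : history) :
  Ex L p (dfs L k) 1 h Psi =
  sumR (map (fun a => actprob p a * next_psi (pos_of k h) (traversed k h) a) (all_acts L)).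
Proof.
  simpl. apply sumR_map_ext. intros a _. unfold next_psi. simpl.
  unfold Psi. rewrite !pos_of_snoc.
  rewrite !(psi_ext _ _ _ (traversed_snoc_after h a _)). reflexivity.
Qed.

Lemma reachable_nil : reachable [].
Proof. exact dfs_state_start. Qed.

Lemma reachable_step (h : history) (a : activation) (m : move) :
  reachable h -> dfs L k h a m <> 0 -> reachable (h ++ [(a, m)]).
Proof.
  unfold reachable. rewrite dfs_rule_eq, pos_of_snoc. intros Hr Hm.
  apply (dfs_state_ext _ (after_tr (pos_of k h) (traversed k h) m));
    [intros y; symmetry; apply traversed_snoc_after|].
  set (x := pos_of k h) in *. set (tr := traversed k h) in *. clearbody x tr.
  destruct (dfs_state_cases x tr Hr)
    as [[-> Hz] | [[Hd _] | [mt [et [_ [_ [Hdet [Hnext _]]]]]]]].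
  - apply dfs_state_first_move, Hz.
  - rewrite Hd in Hm. destruct m; [|simpl in Hm; lra..].
    apply (dfs_state_ext _ tr); [|exact Hr].
    intros y. unfold after_tr. rewrite hits_Wait, orb_false_r. reflexivity.
  - rewrite Hdet in Hm. unfold forced in Hm.
    destruct (nth et a false), m, mt; simpl in Hm; try lra; try congruence;
      apply (dfs_state_ext _ tr); try exact Hr;
      intros y; unfold after_tr; rewrite hits_Wait, orb_false_r; reflexivity.
Qed.

(* The first move: each root edge is taken with probability
   [(1 - (1 - p) ^ 2) / 2], otherwise the search stays put. *)
Lemma start_average (cL cR c0 : R) :
  sumR (map (fun a => actprob p a *
    ((indb (nth (pred k) a false) - / 2 * indb (nth (pred k) a false && nth k a false)) * cL
     + (indb (nth k a false) - / 2 * indb (nth (pred k) a false && nth k a false)) * cR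
     + (1 - indb (nth (pred k) a false || nth k a false)) * c0)) (all_acts L))
  = (1 - (1 - p) ^ 2) / 2 * (cL + cR) + (1 - (1 - (1 - p) ^ 2)) * c0.
Proof.
  rewrite (sumR_map_ext _ (fun a => cL * (actprob p a * indb (nth (pred k) a false))
      + (cR * (actprob p a * indb (nth k a false))
      + ((- / 2 * (cL + cR)) * (actprob p a * indb (nth (pred k) a false && nth k a false))
      + ((- c0) * (actprob p a * indb (nth (pred k) a false || nth k a false))
      + actprob p a * c0))))) by (intros; ring).
  rewrite !sumR_map_plus, !sumR_map_scal, sum_acts_nth, sum_acts_nth, sum_acts_and,
    sum_acts_or, sum_acts_const by lia.
  field.
Qed.

Lemma start_step (tr : nat -> bool) : (forall y, tr y = false) ->
  1 + sumR (map (fun a => actprob p a * next_psi k tr a) (all_acts L)) <= psi k tr.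
Proof.
  intros Hz.
  pose proof (inv_p_pos p hp). pose proof (inv_p_mul p hp). pose proof (inv_two_mul p hp).
  set (cL := if (e <? k)%nat then (k - 1 - e)%nat else (k + e)%nat).
  set (cR := if (e <? k)%nat then (2 * L - k - 1 - e)%nat else (e - k)%nat).
  assert (Hsides : INR cL + INR cR = 2 * INR start_crossings).
  { rewrite <- plus_INR. replace 2 with (INR 2) by (simpl; lra). rewrite <- mult_INR. f_equal.
    unfold cL, cR, start_crossings. case_nat; lia. }
  assert (HL : psi (newpos k Left) (after_tr k tr Left) <= / p * INR cL).
  { unfold psi, remaining, after_tr, cL. rewrite !Hz, ?hits_Left. simpl newpos.
    crush; first [apply inv_p_INR_nonneg, hp | apply inv_p_INR_le; [exact hp | lia]]. }
  assert (HR : psi (newpos k Right) (after_tr k tr Right) <= / p * INR cR).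
  { unfold psi, remaining, after_tr, cR. rewrite !Hz, ?hits_Right. simpl newpos.
    crush; first [apply inv_p_INR_nonneg, hp | apply inv_p_INR_le; [exact hp | lia]]. }
  assert (HW : psi (newpos k Wait) (after_tr k tr Wait) = start_cost).
  { unfold psi, after_tr. rewrite !Hz, !hits_Wait. reflexivity. }
  assert (Hstart : psi k tr = start_cost) by (unfold psi; rewrite !Hz; reflexivity).
  apply Rle_trans with (1 + ((1 - (1 - p) ^ 2) / 2 * (/ p * INR cL + / p * INR cR)
                             + (1 - (1 - (1 - p) ^ 2)) * start_cost)).
  - rewrite <- start_average. apply Rplus_le_compat_l, sumR_map_le. intros a _.
    apply Rmult_le_compat_l; [apply actprob_nonneg; lra|].
    unfold next_psi. cbn [sumR fold_right map]. destruct (start_rule tr a Hz) as [DW [DL DR]].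
    rewrite DW, DL, DR, HW.
    unfold indb. destruct (nth (pred k) a false), (nth k a false); cbn [andb orb]; nra.
  - rewrite Hstart. unfold start_cost. rewrite <- Rmult_plus_distr_l, Hsides. nra.
Qed.

Lemma Psi_step (h : history) : reachable h ->
  not_found k e h + Ex L p (dfs L k) 1 h Psi <= Psi h.
Proof.
  intros Hr. rewrite Ex1_Psi. unfold not_found, Psi, reachable in *.
  set (x := pos_of k h) in *. set (tr := traversed k h) in *. clearbody x tr.
  assert (Hfound : tr e = true ->
    sumR (map (fun a => actprob p a * next_psi x tr a) (all_acts L)) = 0).
  { intros Te. rewrite (sumR_map_ext _ (fun a => actprob p a * 0)); [apply sum_acts_const|].
    intros a _. unfold next_psi, psi, after_tr. rewrite Te. simpl. ring. }
  destruct (dfs_state_cases x tr Hr)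
    as [[-> Hz] | [[_ Te] | [mt [et [Hmt [Het [Hdet [_ [Hstarted Hprogress]]]]]]]]].
  - pose proof (start_step tr Hz). rewrite Hz. exact H.
  - rewrite Te, (Hfound Te). unfold psi. rewrite Te. lra.
  - destruct (tr e) eqn:Te; [rewrite (Hfound eq_refl); unfold psi; rewrite Te; lra|].
    destruct (Hprogress eq_refl) as [Hpos Hcloser].
    pose proof (inv_p_pos p hp). pose proof (inv_p_mul p hp).
    set (A := psi (newpos x mt) (after_tr x tr mt)). set (B := psi x tr).
    assert (HB : B = / p * INR (remaining x tr)).
    { unfold B, psi. rewrite Te. destruct (tr (pred k)), (tr k); easy. }
    assert (HW : psi (newpos x Wait) (after_tr x tr Wait) = B).
    { apply psi_ext. intros y. unfold after_tr. rewrite hits_Wait, orb_false_r. reflexivity. }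
    (* crossing [et] brings [e] one crossing closer, or finds it *)
    assert (HA : A <= B - / p).
    { unfold A, psi at 1. destruct (after_tr x tr mt e) eqn:Ta.
      - rewrite HB. pose proof (le_INR _ _ Hpos). simpl in *. nra.
      - assert (Hst : (negb (after_tr x tr mt (pred k)) && negb (after_tr x tr mt k))%bool = false).
        { unfold after_tr. destruct (tr (pred k)), (tr k); try discriminate; simpl;
            rewrite ?andb_false_r; reflexivity. }
        rewrite Hst, HB. pose proof (le_INR _ _ (Hcloser eq_refl)) as Hc.
        rewrite plus_INR in Hc. simpl in Hc. nra. }
    rewrite (sumR_map_ext _ (fun a => (A - B) * (actprob p a * indb (nth et a false)) + actprob p a * B)).
    + rewrite sumR_map_plus, sumR_map_scal, sum_acts_nth, sum_acts_const by exact Het. nra.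
    + intros a _. unfold next_psi. cbn [sumR fold_right map]. rewrite !Hdet. unfold forced, indb. rewrite HW.
      destruct mt; [congruence | |]; destruct (nth et a false); unfold A; simpl; ring.
Qed.

Lemma start_cost_le_value : start_cost <= game_value L p.
Proof.
  unfold start_cost, game_value. pose proof (inv_p_pos p hp).
  assert (INR start_crossings <= INR L - 1).
  { replace (INR L - 1) with (INR (L - 1)) by (rewrite minus_INR by lia; simpl; ring).
    apply le_INR. unfold start_crossings. case_nat; lia. }
  assert (/ p * INR start_crossings <= / p * (INR L - 1)) by (apply Rmult_le_compat_l; lra).
  unfold Rdiv. lra.
Qed.

Theorem upper_bound :
  exists l, Un_cv (exp_partial L k p (dfs L k) e) l /\ l <= game_value L p.
Proof.
  assert (Hp' : 0 <= p <= 1) by lra.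
  pose proof (legal_probdist L k _ dfs_legal) as Hs.
  assert (Hb : forall N, exp_partial L k p (dfs L k) e N <= game_value L p).
  { intros N. unfold exp_partial.
    rewrite (sum_eq _ (fun t => Ex L p (dfs L k) t [] (not_found k e)))
      by (intros; apply tail_prob_Ex).
    pose proof (telescope_upper L p (dfs L k) Hp' Hs reachable Psi (not_found k e)
      reachable_step Psi_step N [] reachable_nil) as T.
    pose proof (Ex_nonneg L p _ Hp' Hs (S N) [] Psi (fun h => psi_nonneg _ _)).
    assert (HPsi0 : Psi [] = start_cost).
    { unfold Psi, psi. change (traversed k []) with (fun _ : nat => false). reflexivity. }
    pose proof start_cost_le_value. lra. }
  assert (Hg : Un_growing (exp_partial L k p (dfs L k) e)).
  { intros n. unfold exp_partial. cbn [sum_f_R0]. rewrite tail_prob_Ex.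
    assert (0 <= Ex L p (dfs L k) (S n) [] (not_found k e)).
    { apply Ex_nonneg; [exact Hp' | exact Hs|]. intros h. unfold not_found.
      destruct (traversed k h e); lra. }
    lra. }
  destruct (growing_cv _ Hg) as [l Hl].
  { exists (game_value L p). intros x [i ->]. apply Hb. }
  exists l. split; [exact Hl|].
  eapply Rle_cv_lim; [exact Hb | exact Hl |].
  intros eps Heps; exists O; intros; rewrite R_dist_eq; auto.
Qed.

End DepthFirst.

Theorem mainTheorem12 (L k : nat) (p : R)
    (hk0 : (0 < k)%nat) (hkL : (k < L)%nat) (hp : 0 < p <= 1) :
  (* the hider's distribution guarantees at least val(p) against every strategy *)
  (forall s : strategy, legal L k s ->
     forall l, Un_cv (hider_partial L k p s) l -> game_value L p <= l)
  /\
  (* the uniform depth-first strategy is a legal strategy ... *)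
  legal L k (dfs L k)
  /\
  (* ... guaranteeing at most val(p) against every hider edge *)
  (forall e : nat, (e < L)%nat ->
     exists l, Un_cv (exp_partial L k p (dfs L k) e) l /\ l <= game_value L p).
Proof.
  split; [|split].
  - intros s Hl. exact (lower_bound L k p hk0 hkL hp s Hl).
  - exact (dfs_legal L k hk0 hkL).
  - intros e he. exact (upper_bound L k hk0 hkL e he p hp).
Qed.
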